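(* Let $k\ge1$ and let $\mathcal{C}$ be a multiset of non-zero residues modulo $2^{k+1}$ such that no sub-collection of $\mathcal{C}$ sums to $2^k$ modulo $2^{k+1}$. Let $T_1(\mathcal{C})$, $T_2(\mathcal{C})$, $T_3(\mathcal{C})$ denote the results of applying a type 1, type 2, type 3 compression to $\mathcal{C}$ respectively (whenever such a compression is possible). Then $T_1(\mathcal{C})^*=\mathcal{C}^*$, $T_2(\mathcal{C})^*\subseteq\mathcal{C}^*$ and $T_3(\mathcal{C})^*\subseteq\mathcal{C}^*$. Moreover, if $T_2(\mathcal{C})$ or $T_3(\mathcal{C})$ contains $m$ pairwise disjoint non-empty sub-collections each summing to $0$ modulo $2^{k+1}$, then so does $\mathcal{C}$. Finally, if $T_1(\mathcal{C},t)$ denotes the result of a type 1 compression replacing the element $t$, and $T_1(\mathcal{C},t)$ contains $m+|t|-1$ pairwise disjoint non-empty sub-collections each summing to $0$ modulo $2^{k+1}$, then $\mathcal{C}$ contains at least $m$ such sub-collections.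
   Context: Multisets are called collections; disjoint sub-collections use disjoint occurrences of elements. For a multiset $\mathcal{D}=\{a_1,\dots,a_d\}$ of residues modulo $2^{k+1}$, the iterated sumset is the set $\mathcal{D}^*=\{\sum_{i\in I}a_i \bmod 2^{k+1}: I\subseteq[d]\}$ (including the empty sum $0$). For a residue $t$ modulo $2^{k+1}$, $|t|$ denotes the minimal absolute value of an integer in the residue class of $t$. Compressions (for $\mathcal{C}$ as in the claim): Type 1: if $\mathcal{C}$ contains at least $\lambda>0$ elements each equal to $1$ or $-1$ and also an element $t$ with $1<|t|\le\lambda+1$, replace $t$ by $|t|$ copies of $1$ if $t\in[1,2^k-1]$ and by $|t|$ copies of $-1$ otherwise. Type 2: if $\mathcal{C}$ contains an element $-t$ and two copies of $2^k-t$, replace the two copies of $2^k-t$ by two copies of $-t$. Type 3: if $\mathcal{C}$ contains at least $2^{k-1}$ elements each equal to $\pm1$ and two elements $u,v$ lying in the range $[(3/2)2^{k-1},2^k-1]$, replace $u$ and $v$ by $u-2^k$ and $v-2^k$. *)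

(* Residues modulo 2^(k+1) are elements of 'Z_(2 ^ k.+1)
   (a genuine ring since k >= 1 gives modulus >= 4).  Multisets
   ("collections") are sequences, considered up to permutation; a
   sub-collection is a set of indices (positions) of the sequence, so
   disjoint sub-collections use disjoint occurrences. *)
From mathcomp Require Import all_boot all_order all_algebra.
Set Implicit Arguments. Unset Strict Implicit. Unset Printing Implicit Defensive.
Import Order.TTheory GRing.Theory Num.Theory.
Local Open Scope ring_scope.

Notation Res k := 'Z_(2 ^ k.+1).

Definition twok (k : nat) : Res k := (2 ^ k)%N%:R.

Definition absR (k : nat) (t : Res k) : nat :=
  minn (val t) (2 ^ k.+1 - val t)%N.

Definition sub_sum (k : nat) (C : seq (Res k)) (I : {set 'I_(size C)}) : Res k :=
  \sum_(i in I) nth 0 C i.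

(* the iterated sumset C^* (includes the empty sum 0) *)
Definition sumset (k : nat) (C : seq (Res k)) : {set Res k} :=
  [set sub_sum I | I : {set 'I_(size C)}].

Definition has_zero_sums (k : nat) (C : seq (Res k)) (m : nat) : Prop :=
  exists F : 'I_m -> {set 'I_(size C)},
    (forall i, F i != set0 /\ sub_sum (F i) = 0) /\
    (forall i j, i != j -> [disjoint F i & F j]).

Definition is_pm1 (k : nat) (x : Res k) : bool := (x == 1) || (x == -1).

Definition compress1 (k : nat) (C : seq (Res k)) (t : Res k) (C' : seq (Res k)) : Prop :=
  exists lam : nat, [/\ (0 < lam)%N /\ (lam <= count (@is_pm1 k) C)%N,
    t \in C, (1 < absR t)%N, (absR t <= lam + 1)%N &
    perm_eq C' (rem t C ++
      nseq (absR t) (if (1 <= val t < 2 ^ k)%N then 1 else -1))].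

Definition compress2 (k : nat) (C : seq (Res k)) (C' : seq (Res k)) : Prop :=
  exists t : Res k, [/\ - t \in C, (2 <= count_mem (twok k - t)%R C)%N &
    perm_eq C' (rem (twok k - t) (rem (twok k - t) C) ++ [:: - t; - t])].

Definition in_range3 (k : nat) (u : Res k) : bool :=
  (3 * 2 ^ k.-1 <= 2 * val u)%N && (val u <= 2 ^ k - 1)%N.

(* type 3 compression (u, v are two distinct occurrences) *)
Definition compress3 (k : nat) (C : seq (Res k)) (C' : seq (Res k)) : Prop :=
  exists u v : Res k, [/\ (2 ^ k.-1 <= count (@is_pm1 k) C)%N,
    u \in C /\ v \in rem u C, in_range3 u, in_range3 v &
    perm_eq C' (rem v (rem u C) ++ [:: u - twok k; v - twok k])].

From mathcomp Require Import all_boot all_order all_algebra zify.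
Set Implicit Arguments. Unset Strict Implicit. Unset Printing Implicit Defensive.
Import Order.TTheory GRing.Theory Num.Theory.
Local Open Scope ring_scope.

(* Collections are sequences taken up to permutation: a subsum of C is the sum of one side
   of a splitting C ~ S ++ T, and m disjoint zero-sum sub-collections amount to a partition
   of C into blocks, at least m of which are non-empty with sum 0.
   A type 1 compression trades t = |t|e (e = 1 or -1) for |t| copies of e.  The elements
   +-e already present realise the multiples d e for d in a window [-b, a] of length at
   least |t| - 1, so shifting the window by |t| leaves no gap and the sumset is unchanged;
   conversely, merging the |t| copies of e back into t destroys at most |t| - 1 blocks.
   Type 2 and 3 compressions subtract 2^k from two elements, which keeps their sum since
   2 * 2^k = 0.  Undoing this in a zero-sum block containing only one of the two new
   elements would give a sub-collection of C of sum 2^k, which is excluded, so zero-sum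
   blocks lift back to C.  For the sumset in type 3, the many +-1 absorb the difference
   between using one or both of the new elements. *)

Ltac perm_by_count :=
  let p := fresh "p" in apply/permP => p;
  repeat match goal with H : is_true (perm_eq _ _) |- _ => move: (permP H p); clear H end;
  rewrite /= ?flatten_cat /= ?count_cat /= ?flatten_cat /= ?count_cat /=; lia.

Lemma exists_window_shift (P : int -> Prop) (a b s : int) : 0 <= s <= a + b + 1 ->
  (exists d : int, - b <= d <= a + s /\ P d) <->
  (exists d : int, - b <= d <= a /\ (P d \/ P (d + s))).
Proof.
move=> /andP [s_ge0 s_le].
split=> [[d [/andP [d_ge d_le] Pd]] | [d [/andP [d_ge d_le] [Pd | Pds]]]].
- have [d_lea | d_gta] := lerP d a; first by exists d; split; [apply/andP | left].
  exists (d - s); split; first by apply/andP; split; lia.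
  by right; rewrite subrK.
- by exists d; split=> //; apply/andP; split; lia.
- by exists (d + s); split=> //; apply/andP; split; lia.
Qed.

Section Subsums.

Variable V : zmodType.
Implicit Types (C L R Q S T : seq V) (w x y z e : V).

Definition subsum C w := exists S T, perm_eq C (S ++ T) /\ w = \sum_(z <- S) z.

Lemma subsum_perm C C' w : perm_eq C C' -> subsum C w <-> subsum C' w.
Proof.
by move=> eC; split=> -[S [T [eS ->]]]; exists S, T; rewrite ?(permPl eC) // -(permPl eC).
Qed.

Lemma subsum_cons z L w : subsum (z :: L) w <-> subsum L w \/ subsum L (w - z).
Proof.
split=> [[S [T [eL ->]]] | [[S [T [eL ->]]] | [S [T [eL eS]]]]].
- have : z \in S ++ T by rewrite -(perm_mem eL) mem_head.
  rewrite mem_cat => /orP [zS | zT].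
    have eS := perm_to_rem zS; right; exists (rem z S), T; split; first by perm_by_count.
    by rewrite (perm_big _ eS) big_cons addrC addKr.
  by have eT := perm_to_rem zT; left; exists S, (rem z T); split=> //; perm_by_count.
- by exists S, (z :: T); split=> //; perm_by_count.
- exists (z :: S), T; split; first by rewrite /= perm_cons.
  by rewrite big_cons -eS addrC subrK.
Qed.

Lemma subsum_nseq_cat z n L w :
  subsum (nseq n z ++ L) w <-> exists2 i, (i <= n)%N & subsum L (w - z *+ i).
Proof.
elim: n w => [|n IHn] w /=.
  split=> [Lw | [i]]; first by exists 0%N => //; rewrite subr0.
  by rewrite leqn0 => /eqP ->; rewrite subr0.
rewrite subsum_cons !IHn; split=> [[[i le_in Lw] | [i le_in Lw]] | [[|i] le_in Lw]].
- by exists i => //; apply: leqW.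
- by exists i.+1 => //; rewrite mulrS opprD addrA.
- by left; exists 0%N.
- by right; exists i => //; rewrite mulrS opprD addrA in Lw.
Qed.

Lemma subsum_pm e a b Q w :
  subsum (nseq a e ++ nseq b (- e) ++ Q) w <->
  exists d : int, - (b%:Z) <= d <= a%:Z /\ subsum Q (w - e *~ d).
Proof.
rewrite subsum_nseq_cat; split=> [[i le_ia] | [[i | j] [/andP [d_ge d_le] Qw]]].
- rewrite subsum_nseq_cat => -[j le_jb Qw].
  exists (i%:Z - j%:Z); split; first by apply/andP; split; lia.
  by rewrite mulrzBr -!pmulrn mulNrn opprB addrA opprK addrAC in Qw *.
- exists i; first by lia.
  by rewrite subsum_nseq_cat; exists 0%N => //; rewrite subr0 pmulrn.
- exists 0%N => //; rewrite subsum_nseq_cat; exists j.+1; first by lia.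
  by rewrite mulr0n subr0 mulNrn; rewrite NegzE mulrNz -pmulrn in Qw.
Qed.

Lemma subsum_multiple e t s a b Q R w :
  perm_eq R (nseq a e ++ nseq b (- e) ++ Q) -> t = e *+ s -> (s <= a + b + 1)%N ->
  subsum (nseq s e ++ R) w <-> subsum (t :: R) w.
Proof.
move=> eR -> le_s.
have eR' : perm_eq (nseq s e ++ R) (nseq (a + s) e ++ nseq b (- e) ++ Q).
  by rewrite addnC nseqD -catA perm_cat2l.
have shiftQ d : w - e *+ s - e *~ d = w - e *~ (d + s%:Z).
  by rewrite mulrzDr -pmulrn opprD addrA addrAC.
rewrite (subsum_perm _ eR') subsum_cons !(subsum_perm _ eR) !subsum_pm PoszD.
rewrite exists_window_shift; last by apply/andP; split; lia.
split=> [[d [d_in [Qw | Qws]]] | [[d [d_in Qw]] | [d [d_in Qws]]]].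
- by left; exists d.
- by right; exists d; rewrite shiftQ.
- by exists d; split=> //; left.
- by exists d; split=> //; right; rewrite -shiftQ.
Qed.

Lemma subsum_shift e a b Q R (p q : nat) w :
  perm_eq R (nseq a e ++ nseq b (- e) ++ Q) -> (p + q <= a + b + 1)%N ->
  subsum R (w + e *+ p) -> subsum R w \/ subsum R (w + e *+ (p + q)).
Proof.
move=> eR le_pq; rewrite !(subsum_perm _ eR) !subsum_pm => -[d [/andP [d_ge d_le] Qw]].
have : exists c : int, - b%:Z <= c <= a%:Z + (p + q)%:Z /\
                       subsum Q (w + e *+ (p + q) - e *~ c).
  exists (d + q%:Z); split; first by apply/andP; split; lia.
  by rewrite mulrzDr -pmulrn mulrnDr addrA [_ + e *+ q]addrC addrKA.
rewrite exists_window_shift; last by apply/andP; split; lia.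
move=> [c [c_in [Qc | Qcs]]]; [right | left]; exists c; split=> //.
by rewrite mulrzDr -pmulrn [_ + e *+ _]addrC addrKA in Qcs.
Qed.

Lemma subsum_triple x y R w : y *+ 2 = x *+ 2 ->
  subsum (x :: x :: x :: R) w -> subsum (y :: y :: x :: R) w.
Proof.
move=> yx; rewrite -[x :: x :: x :: R]/(nseq 3 x ++ R) -[y :: y :: _]/(nseq 2 y ++ _).
move=> /subsum_nseq_cat [i le_i3 Rw]; apply/subsum_nseq_cat.
case: i le_i3 Rw => [|[|[|[|//]]]] _ Rw.
- by exists 0%N => //; apply/subsum_cons; left; rewrite mulr0n subr0 in Rw *.
- by exists 0%N => //; apply/subsum_cons; right; rewrite mulr0n subr0 -[x]mulr1n.
- by exists 2%N => //; apply/subsum_cons; left; rewrite yx.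
- by exists 2%N => //; apply/subsum_cons; right; rewrite yx -addrA -opprD -mulrSr.
Qed.

End Subsums.

Section ZeroBlocks.

Variable V : zmodType.
Implicit Types (C R S X Y : seq V) (Bs : seq (seq V)) (x y d : V).

Definition zero_block S := (S != [::]) && (\sum_(z <- S) z == 0).

(* [Bs] partitions [C]; its blocks that are not zero blocks collect the unused elements. *)
Definition zero_blocks C m :=
  exists2 Bs, perm_eq C (flatten Bs) & (m <= count zero_block Bs)%N.

Lemma zero_blocks_perm C C' m : perm_eq C C' -> zero_blocks C m <-> zero_blocks C' m.
Proof.
by move=> eC; split=> -[Bs eBs le_m]; exists Bs; rewrite ?(permPl eC) // -(permPl eC).
Qed.

Lemma zero_block_perm S S' : perm_eq S S' -> zero_block S = zero_block S'.
Proof. by move=> eS; rewrite /zero_block -!size_eq0 (perm_size eS) (perm_big _ eS). Qed.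

Lemma zero_block_cons x S : zero_block (x :: S) = (x + \sum_(z <- S) z == 0).
Proof. by rewrite /zero_block big_cons. Qed.

Lemma perm_flatten_mem x Bs :
  x \in flatten Bs -> exists X Bs', perm_eq Bs (X :: Bs') /\ x \in X.
Proof. by case/flattenP=> X XBs xX; exists X, (rem X Bs); rewrite perm_to_rem. Qed.

Variant pair_location x y R Bs : Prop :=
  | PairInOneBlock X Bs1 of
      count zero_block Bs = (zero_block (x :: y :: X) + count zero_block Bs1)%N &
      perm_eq R (X ++ flatten Bs1)
  | PairInTwoBlocks X Y Bs2 of
      count zero_block Bs =
        (zero_block (x :: X) + zero_block (y :: Y) + count zero_block Bs2)%N &
      perm_eq R (X ++ Y ++ flatten Bs2).

Lemma locate_pair x y R Bs : perm_eq (x :: y :: R) (flatten Bs) -> pair_location x y R Bs.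
Proof.
move=> eBs.
have /perm_flatten_mem [X [Bs1 [eX xX]]] : x \in flatten Bs.
  by rewrite -(perm_mem eBs) mem_head.
have eXx := perm_to_rem xX; have eF := perm_flatten eX.
have cBs : count zero_block Bs = (zero_block X + count zero_block Bs1)%N.
  by rewrite (permP eX).
have eyR : perm_eq (y :: R) (rem x X ++ flatten Bs1) by perm_by_count.
have : y \in rem x X ++ flatten Bs1 by rewrite -(perm_mem eyR) mem_head.
rewrite mem_cat => /orP [yX | /perm_flatten_mem [Y [Bs2 [eY yY]]]].
  have eXy := perm_to_rem yX.
  have eXxy : perm_eq X (x :: y :: rem y (rem x X)) by rewrite (perm_trans eXx) ?perm_cons.
  apply: (@PairInOneBlock _ _ _ _ (rem y (rem x X)) Bs1); last by perm_by_count.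
  by rewrite cBs (zero_block_perm eXxy).
have eYy := perm_to_rem yY; have eF1 := perm_flatten eY.
apply: (@PairInTwoBlocks _ _ _ _ (rem x X) (rem y Y) Bs2); last by perm_by_count.
by rewrite cBs (permP eY) /= (zero_block_perm eXx) (zero_block_perm eYy) addnA.
Qed.

Lemma zero_blocks_merge x y R m :
  zero_blocks (x :: y :: R) m.+1 -> zero_blocks ((x + y) :: R) m.
Proof.
case=> Bs /locate_pair [X Bs1 cBs eR | X Y Bs2 cBs eR] le_m.
  exists (((x + y) :: X) :: Bs1); first by rewrite /= perm_cons.
  rewrite /= [zero_block _](_ : _ = zero_block (x :: y :: X)); first by lia.
  by rewrite !zero_block_cons big_cons addrA.
exists (((x + y) :: X ++ Y) :: Bs2); first by rewrite /= perm_cons -catA.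
rewrite /=; set glued := zero_block _.
suff : (zero_block (x :: X) + zero_block (y :: Y) <= glued + 1)%N by lia.
rewrite /glued !zero_block_cons big_cat /= addrACA.
by case: (x + _ =P 0) => [-> | _]; case: (y + _ =P 0) => [-> | _];
  rewrite ?addr0 ?eqxx //=; lia.
Qed.

Lemma zero_blocks_merge_nseq x e n R m :
  zero_blocks (x :: nseq n e ++ R) (m + n) -> zero_blocks ((x + e *+ n) :: R) m.
Proof.
elim: n x => [|n IHn] x; first by rewrite addn0 mulr0n addr0.
by rewrite addnS => /zero_blocks_merge /IHn; rewrite mulrS addrA.
Qed.

Lemma zero_blocks_translate2 (d p1 p2 : V) R m :
  d *+ 2 = 0 -> ~ subsum ((p1 + d) :: (p2 + d) :: R) d ->
  zero_blocks (p1 :: p2 :: R) m -> zero_blocks ((p1 + d) :: (p2 + d) :: R) m.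
Proof.
move=> d2 dC [Bs /locate_pair [X Bs1 cBs eR | X Y Bs2 cBs eR] le_m].
  exists (((p1 + d) :: (p2 + d) :: X) :: Bs1); first by rewrite /= !perm_cons.
  rewrite /= [zero_block _](_ : _ = zero_block (p1 :: p2 :: X)); first by lia.
  rewrite !zero_block_cons !big_cons.
  by rewrite -(addrA p2) (addrC d) (addrA p2) addrACA -mulr2n d2 addr0.
(* Shifting the lone element [p] of a zero block by [d] would produce a subsum [d]. *)
have not_zero (p : V) Z T : perm_eq ((p1 + d) :: (p2 + d) :: R) (((p + d) :: Z) ++ T) ->
    zero_block (p :: Z) = false.
  move=> eC; apply/negP; rewrite zero_block_cons => /eqP sZ.
  by apply: dC; exists ((p + d) :: Z), T; rewrite big_cons addrAC sZ add0r.
have zX := not_zero p1 X ((p2 + d) :: Y ++ flatten Bs2) ltac:(perm_by_count).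
have zY := not_zero p2 Y ((p1 + d) :: X ++ flatten Bs2) ltac:(perm_by_count).
exists (((p1 + d) :: X) :: ((p2 + d) :: Y) :: Bs2); first by perm_by_count.
by rewrite /=; lia.
Qed.

End ZeroBlocks.

Arguments zero_block {V} S.

Section SubCollections.

Variables (V : zmodType) (C : seq V).
Implicit Types (A B F : {set 'I_(size C)}) (S T : seq V) (Bs : seq (seq V)).

Definition subcoll A := [seq nth 0 C i | i : 'I_(size C) <- enum A].

Lemma subcoll_setT : subcoll [set: 'I_(size C)] = C.
Proof.
by rewrite /subcoll enum_setT -enumT map_comp val_enum_ord -/(mkseq _ _) mkseq_nth.
Qed.

Lemma subcoll_set0 : subcoll set0 = [::].
Proof. by rewrite /subcoll enum_set0. Qed.

Lemma subcoll_setD A B :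
  A \subset B -> perm_eq (subcoll B) (subcoll A ++ subcoll (B :\: A)).
Proof.
move=> sAB; rewrite /subcoll -map_cat perm_map // uniq_perm ?enum_uniq //.
  by rewrite cat_uniq !enum_uniq andbT; apply/hasPn => i; rewrite !mem_enum inE => /andP [].
move=> i; rewrite mem_cat !mem_enum inE.
by case: (boolP (i \in A)) => // /(subsetP sAB).
Qed.

Lemma subcoll_split B S T : perm_eq (subcoll B) (S ++ T) ->
  exists2 A : {set 'I_(size C)}, A \subset B &
    perm_eq (subcoll A) S /\ perm_eq (subcoll (B :\: A)) T.
Proof.
move=> eB.
have /count_subseqP [_ /subseqP [mk _ ->] eS] :
    forall z, (count_mem z S <= count_mem z (subcoll B))%N.
  by move=> z; rewrite (permP eB) count_cat leq_addr.
pose A : {set 'I_(size C)} := [set i in mask mk (enum B)].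
have sAB : A \subset B by apply/subsetP => i; rewrite inE => /mem_mask; rewrite mem_enum.
have eA : perm_eq (subcoll A) S.
  rewrite perm_sym (perm_trans eS) // -map_mask perm_map // uniq_perm ?enum_uniq //.
    exact: mask_uniq (enum_uniq _) mk.
  by move=> i; rewrite mem_enum inE.
exists A => //; split=> //; have eBA := subcoll_setD sAB; perm_by_count.
Qed.

Lemma subcoll_flatten B Bs : perm_eq (subcoll B) (flatten Bs) ->
  exists Fs : seq {set 'I_(size C)},
    [/\ all (fun F => F \subset B) Fs, pairwise (fun F1 F2 => [disjoint F1 & F2]) Fs,
        size Fs = size Bs & forall j, perm_eq (subcoll (nth set0 Fs j)) (nth [::] Bs j)].
Proof.
elim: Bs B => [|X Bs IHBs] B eB.
  by exists [::]; split=> // j; rewrite !nth_nil subcoll_set0.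
have [A sAB [eA eBA]] := subcoll_split eB.
have [Fs [sFs dFs szFs eFs]] := IHBs _ eBA.
have sFsA F : F \in Fs -> F \subset B :\: A by move/(allP sFs).
exists (A :: Fs); split=> /=; last by case.
- rewrite sAB; apply/allP => F /sFsA /subset_trans; apply; exact: subsetDl.
- rewrite dFs andbT; apply/allP => F /sFsA.
  by rewrite subsetD disjoint_sym => /andP [].
- by rewrite szFs.
Qed.

Lemma subcoll_cover B Fs :
  all (fun F => F \subset B) Fs -> pairwise (fun F1 F2 => [disjoint F1 & F2]) Fs ->
  perm_eq (subcoll B) (flatten (map subcoll Fs) ++ subcoll (B :\: \bigcup_(F <- Fs) F)).
Proof.
elim: Fs B => [|A Fs IHFs] B /=; first by rewrite big_nil setD0.
move=> /andP [sAB sFs] /andP [dA dFs].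
have sFsA : all (fun F => F \subset B :\: A) Fs.
  by apply/allP => F F_in; rewrite subsetD (allP sFs) //= disjoint_sym (allP dA).
rewrite big_cons -setDDl -catA (perm_trans (subcoll_setD sAB)) // perm_cat2l.
exact: IHFs.
Qed.

End SubCollections.

Arguments subcoll {V C} A.

Section Residues.

Variable k : nat.
Implicit Types (C Q R : seq (Res k)) (e t u x z : Res k).

Lemma modulus_gt1 : (1 < 2 ^ k.+1)%N.
Proof. by rewrite -[1%N]/(2 ^ 0)%N ltn_exp2l. Qed.

Lemma val_Res_nat n : val (n%:R : Res k) = (n %% 2 ^ k.+1)%N.
Proof. exact: val_Zp_nat modulus_gt1 n. Qed.

Lemma val_Res_lt x : (val x < 2 ^ k.+1)%N.
Proof. by rewrite -[x]natr_Zp val_Res_nat ltn_mod expn_gt0. Qed.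

Lemma Res_modulus : (2 ^ k.+1)%:R = 0 :> Res k.
Proof. exact: pchar_Zp modulus_gt1. Qed.

Lemma twok_double : twok k *+ 2 = 0.
Proof. by rewrite /twok -mulrnA -expnSr Res_modulus. Qed.

Lemma twok_neq0 : twok k != 0.
Proof.
apply/eqP => /(congr1 val); rewrite val_Res_nat modn_small ?ltn_exp2l //.
by move/eqP; rewrite expn_eq0.
Qed.

Lemma val_Res1 : val (1 : Res k) = 1%N.
Proof. by rewrite -[1]/(1%:R) val_Res_nat modn_small ?modulus_gt1. Qed.

Lemma val_ResN1 : val (-1 : Res k) = (2 ^ k.+1).-1.
Proof.
have -> : (-1 : Res k) = (2 ^ k.+1).-1%:R.
  by apply/eqP; rewrite eq_sym -addr_eq0 natr1 prednK ?expn_gt0 ?Res_modulus.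
by rewrite val_Res_nat modn_small // prednK ?expn_gt0.
Qed.

Lemma absR_pm1 x : is_pm1 x -> absR x = 1%N.
Proof.
rewrite /absR => /orP [] /eqP ->; rewrite ?val_Res1 ?val_ResN1; have := modulus_gt1; lia.
Qed.

Lemma absR_sign t : t = (if (1 <= val t < 2 ^ k)%N then 1 else -1) *+ absR t.
Proof.
have := val_Res_lt t; rewrite /absR -[in LHS](natr_Zp t) -![val t]/(nat_of_ord t).
move: (nat_of_ord t) => v v_lt.
have modulusE : (2 ^ k.+1 = 2 * 2 ^ k)%N by rewrite expnS.
case: ifP => [/andP [v_ge1 v_lt2k] | v_out]; first by rewrite (minn_idPl _) //; lia.
have [-> | v_gt0] := posnP v; first by rewrite min0n mulr0n.
rewrite (minn_idPr _); last by move/negbT: v_out; rewrite negb_and -leqNgt; lia.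
by apply/eqP; rewrite mulNrn -addr_eq0 -natrD subnKC ?Res_modulus // ltnW.
Qed.

Lemma is_pm1_eq e z : is_pm1 e -> is_pm1 z = (z == e) || (z == - e).
Proof. by rewrite /is_pm1 => /orP [] /eqP ->; rewrite ?opprK // orbC. Qed.

Lemma pm1_split e R : is_pm1 e ->
  exists (a b : nat) Q, perm_eq R (nseq a e ++ nseq b (- e) ++ Q) /\
                        count (@is_pm1 k) R = (a + b)%N.
Proof.
move=> e_pm1; elim: R => [|z R [a [b [Q [eR cR]]]]]; first by exists 0%N, 0%N, [::].
rewrite /= (is_pm1_eq z e_pm1) cR.
have [-> | z_ne] := eqVneq z e; first by exists a.+1, b, Q; rewrite perm_cons.
have [-> | z_neN] := eqVneq z (- e).
  by exists a, b.+1, Q; split; [perm_by_count | rewrite /= addnS].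
by exists a, b, (z :: Q); split; [perm_by_count | rewrite /=].
Qed.

Lemma in_range3_not_pm1 u : in_range3 u -> ~~ is_pm1 u.
Proof.
case/andP=> u_lo u_hi; apply/negP => /orP [] /eqP u_pm1;
  move: u_lo u_hi; rewrite u_pm1 ?val_Res1 ?val_ResN1.
  by have := expn_gt0 2 k.-1; lia.
by have := expn_gt0 2 k; rewrite expnS; lia.
Qed.

Lemma in_range3_shift u : in_range3 u ->
  exists2 p, (2 * p <= 2 ^ k.-1)%N & u - twok k = - p%:R.
Proof.
case/andP=> u_lo u_hi; exists (2 ^ k - val u)%N.
  have : (2 ^ k <= 2 * 2 ^ k.-1)%N by rewrite -expnS leq_exp2l // leqSpred.
  lia.
have u_le : (val u <= 2 ^ k)%N by lia.
have -> : twok k = (val u)%:R + (2 ^ k - val u)%:R by rewrite /twok -natrD subnKC.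
by rewrite -{1}[u]natr_Zp opprD addrA subrr add0r.
Qed.

End Residues.

Section IndexSets.

Variables (k : nat) (C : seq (Res k)).
Implicit Types (A : {set 'I_(size C)}) (x : Res k).

Lemma sub_sumE A : sub_sum A = \sum_(z <- subcoll A) z.
Proof. by rewrite /sub_sum big_map big_enum. Qed.

Lemma zero_block_subcoll A : zero_block (subcoll A) = (A != set0) && (sub_sum A == 0).
Proof. by rewrite /zero_block -size_eq0 size_map -cardE cards_eq0 sub_sumE. Qed.

Lemma sumsetP x : x \in sumset C <-> subsum C x.
Proof.
split=> [/imsetP [A _ ->] | [S [T [eC ->]]]].
  exists (subcoll A), (subcoll (~: A)); rewrite sub_sumE; split=> //.
  by have := subcoll_setD (subsetT A); rewrite subcoll_setT setTD.
have [|A _ [eA _]] := @subcoll_split _ C setT S T; first by rewrite subcoll_setT.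
by apply/imsetP; exists A; rewrite // sub_sumE (perm_big _ eA).
Qed.

Lemma zero_blocks_of_has_zero_sums m : has_zero_sums C m -> zero_blocks C m.
Proof.
case=> F [F_zero F_disj]; pose Fs := [seq F j | j <- enum 'I_m].
have dFs : pairwise (fun F1 F2 : {set 'I_(size C)} => [disjoint F1 & F2]) Fs.
  rewrite pairwise_map; apply: (@sub_pairwise _ (fun i j : 'I_m => (i < j)%N)).
    by move=> i j /= lt_ij; apply: F_disj; rewrite neq_ltn lt_ij.
  rewrite -(pairwise_map val (fun a b => a < b)%N) val_enum_ord.
  by rewrite -sorted_pairwise ?iota_ltn_sorted //; apply: ltn_trans.
have sFs : all (fun X : {set 'I_(size C)} => X \subset setT) Fs.
  by apply/allP => ? _; apply: subsetT.
have := subcoll_cover sFs dFs; rewrite subcoll_setT => eC.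
exists (map subcoll Fs ++ [:: subcoll (setT :\: \bigcup_(X <- Fs) X)]).
  by rewrite flatten_cat /= cats0.
rewrite count_cat (@eq_in_count _ _ predT) ?count_predT ?size_map -?enumT ?size_enum_ord.
  exact: leq_addr.
by move=> _ /mapP [_ /mapP [j _ ->] ->]; rewrite zero_block_subcoll; case: (F_zero j) => -> ->.
Qed.

Lemma has_zero_sums_of_zero_blocks m : zero_blocks C m -> has_zero_sums C m.
Proof.
case=> Bs eC le_m; pose Bz := filter zero_block Bs; pose Bn := filter (predC zero_block) Bs.
have eC' : perm_eq (subcoll [set: 'I_(size C)]) (flatten (Bz ++ [:: flatten Bn])).
  rewrite subcoll_setT flatten_cat /= cats0 -flatten_cat (permPl eC).
  by rewrite perm_flatten // perm_sym perm_filterC.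
have [Fs [_ dFs szFs eFs]] := subcoll_flatten eC'.
have le_m_Bz : (m <= size Bz)%N by rewrite size_filter.
exists (fun j : 'I_m => nth set0 Fs j); split.
  move=> j; have lt_j : (j < size Bz)%N := leq_trans (ltn_ord j) le_m_Bz.
  have : zero_block (nth [::] (Bz ++ [:: flatten Bn]) j).
    by rewrite nth_cat lt_j; apply: (allP (filter_all _ _)); apply: mem_nth.
  by rewrite -(zero_block_perm (eFs j)) zero_block_subcoll => /andP [-> /eqP].
have lt_Fs (j : 'I_m) : (j : nat) \in gtn (size Fs).
  by rewrite inE szFs size_cat addn1 ltnS (leq_trans (ltnW (ltn_ord j))).
move=> i j; rewrite neq_ltn => /orP [] lt_ij; last rewrite disjoint_sym.
  exact: (pairwiseP set0 dFs) (lt_Fs i) (lt_Fs j) lt_ij.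
exact: (pairwiseP set0 dFs) (lt_Fs j) (lt_Fs i) lt_ij.
Qed.

Lemma has_zero_sumsP m : has_zero_sums C m <-> zero_blocks C m.
Proof.
by split; [apply: zero_blocks_of_has_zero_sums | apply: has_zero_sums_of_zero_blocks].
Qed.

End IndexSets.

Section Compressions.

Variable k : nat.
Implicit Types (C R : seq (Res k)) (t : Res k).

Lemma compress1_form C t C' : compress1 C t C' ->
  exists e R, [/\ is_pm1 e, perm_eq C (t :: R), perm_eq C' (nseq (absR t) e ++ R),
                  t = e *+ absR t & (1 < absR t <= count (@is_pm1 k) R + 1)%N].
Proof.
case=> lam [[_ lam_le] tC t_gt1 t_le eC'].
have eC := perm_to_rem tC.
exists (if (1 <= val t < 2 ^ k)%N then 1 else -1), (rem t C); split=> //.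
- by case: ifP; rewrite /is_pm1 eqxx ?orbT.
- by rewrite (perm_trans eC') // perm_catC.
- exact: absR_sign.
have t_pm1 : is_pm1 t = false by apply/negP => /absR_pm1; lia.
by have := permP eC (@is_pm1 k); rewrite /= t_pm1; lia.
Qed.

Lemma sumset_compress1 C t C' : compress1 C t C' -> sumset C' = sumset C.
Proof.
move=> /compress1_form [e [R [e_pm1 eC eC' te /andP [_ t_le]]]].
have [a [b [Q [eR cR]]]] := pm1_split R e_pm1.
have CC' w : subsum C' w <-> subsum C w.
  rewrite (subsum_perm _ eC') (subsum_perm _ eC); apply: subsum_multiple eR te _; lia.
by apply/setP => w; apply/idP/idP => /sumsetP /CC' /sumsetP.
Qed.

Lemma has_zero_sums_compress1 C t C' m : compress1 C t C' ->
  has_zero_sums C' (m + absR t - 1) -> has_zero_sums C m.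
Proof.
move=> /compress1_form [e [R [_ eC eC' te /andP [t_gt1 _]]]] /has_zero_sumsP.
rewrite (zero_blocks_perm _ eC') => Z; apply/has_zero_sumsP/(zero_blocks_perm _ eC).
move: Z te; case: (absR t) t_gt1 => [//|s] _; rewrite addnS subn1 /=.
by move=> Z ->; rewrite mulrS; apply: zero_blocks_merge_nseq.
Qed.

Lemma compress2_form C C' : compress2 C C' -> exists x R,
  perm_eq C ((x + twok k) :: (x + twok k) :: x :: R) /\ perm_eq C' (x :: x :: x :: R).
Proof.
case=> t [tC cnt eC']; exists (- t), (rem (- t) (rem (twok k - t) (rem (twok k - t) C))).
rewrite addrC; set a := twok k - t in cnt eC' *; set x := - t in tC eC' *.
have xa : x != a.
  by rewrite /a addrC -{1}[x]addr0 (inj_eq (addrI x)) eq_sym twok_neq0.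
have aC : a \in C by rewrite -has_pred1 has_count; apply: leq_trans cnt.
have aC1 : a \in rem a C.
  by rewrite -has_pred1 has_count count_mem_rem eqxx; move: cnt; lia.
have xC2 : x \in rem a (rem a C).
  by rewrite -has_pred1 has_count !count_mem_rem eq_sym (negbTE xa) !subn0 -has_count has_pred1.
have eC := perm_to_rem aC; have eC1 := perm_to_rem aC1; have eC2 := perm_to_rem xC2.
by split; perm_by_count.
Qed.

Lemma sumset_compress2 C C' : compress2 C C' -> sumset C' \subset sumset C.
Proof.
move=> /compress2_form [x [R [eC eC']]]; apply/subsetP => w /sumsetP.
rewrite (subsum_perm _ eC') => Cw; apply/sumsetP; rewrite (subsum_perm _ eC).
by apply: subsum_triple Cw; rewrite mulrnDl twok_double addr0.
Qed.

Lemma has_zero_sums_compress2 C C' m : ~ subsum C (twok k) -> compress2 C C' ->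
  has_zero_sums C' m -> has_zero_sums C m.
Proof.
move=> noC /compress2_form [x [R [eC eC']]] /has_zero_sumsP.
rewrite (zero_blocks_perm _ eC') => Z; apply/has_zero_sumsP/(zero_blocks_perm _ eC).
by apply: zero_blocks_translate2 (twok_double k) _ Z; rewrite -(subsum_perm _ eC).
Qed.

Lemma compress3_form C C' : compress3 C C' -> exists u' v' (pu pv : nat) R,
  [/\ perm_eq C ((u' + twok k) :: (v' + twok k) :: R), perm_eq C' (u' :: v' :: R),
      u' = - pu%:R, v' = - pv%:R & (pu + pv <= count (@is_pm1 k) R)%N].
Proof.
case=> u [v [cnt [uC vC] u_r v_r eC']].
have [pu pu_le u_sh] := in_range3_shift u_r; have [pv pv_le v_sh] := in_range3_shift v_r.
exists (u - twok k), (v - twok k), pu, pv, (rem v (rem u C)); rewrite !subrK.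
have eC : perm_eq C (u :: v :: rem v (rem u C)).
  by have eu := perm_to_rem uC; have ev := perm_to_rem vC; perm_by_count.
split=> //; first by perm_by_count.
have := permP eC (@is_pm1 k).
by rewrite /= (negbTE (in_range3_not_pm1 u_r)) (negbTE (in_range3_not_pm1 v_r)); lia.
Qed.

Lemma sumset_compress3 C C' : compress3 C C' -> sumset C' \subset sumset C.
Proof.
move=> /compress3_form [u' [v' [pu [pv [R [eC eC' eu ev le_p]]]]]]; subst u' v'.
have [a [b [Q [eR cR]]]] := @pm1_split k 1 R (orTb _).
apply/subsetP => w /sumsetP; rewrite (subsum_perm _ eC') => Cw; apply/sumsetP.
rewrite (subsum_perm _ eC).
have uv : w - (- pu%:R + twok k) - (- pv%:R + twok k) = w + 1 *+ (pu + pv).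
  by rewrite -addrA -opprD addrACA -mulr2n twok_double addr0 -opprD opprK -natrD.
suff [Rw | Rw] : subsum R w \/ subsum R (w + 1 *+ (pu + pv)).
- by apply/subsum_cons; left; apply/subsum_cons; left.
- by apply/subsum_cons; right; apply/subsum_cons; right; rewrite uv.
move: Cw; rewrite !subsum_cons !opprK => -[[Rw | Rw] | [Rw | Rw]].
- by left.
- by rewrite addnC; apply: subsum_shift eR _ Rw; lia.
- by apply: subsum_shift eR _ Rw; lia.
- by right; rewrite natrD addrA.
Qed.

Lemma has_zero_sums_compress3 C C' m : ~ subsum C (twok k) -> compress3 C C' ->
  has_zero_sums C' m -> has_zero_sums C m.
Proof.
move=> noC /compress3_form [u' [v' [_ [_ [R [eC eC' _ _ _]]]]]] /has_zero_sumsP.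
rewrite (zero_blocks_perm _ eC') => Z; apply/has_zero_sumsP/(zero_blocks_perm _ eC).
by apply: zero_blocks_translate2 (twok_double k) _ Z; rewrite -(subsum_perm _ eC).
Qed.

End Compressions.

Unset Implicit Arguments.

Theorem lemma3p5 (k : nat) (hk : (1 <= k)%N) (C : seq (Res k))
  (hnz : all (fun x => x != 0) C)
  (hno : forall I : {set 'I_(size C)}, sub_sum I != twok k) :
  (forall (t : Res k) (C' : seq (Res k)), compress1 C t C' ->
     sumset C' = sumset C /\
     (forall m : nat, has_zero_sums C' (m + absR t - 1) -> has_zero_sums C m)) /\
  (forall C' : seq (Res k), compress2 C C' ->
     (sumset C' \subset sumset C) /\
     (forall m : nat, has_zero_sums C' m -> has_zero_sums C m)) /\
  (forall C' : seq (Res k), compress3 C C' ->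
     (sumset C' \subset sumset C) /\
     (forall m : nat, has_zero_sums C' m -> has_zero_sums C m)).
Proof.
have no_twok : ~ subsum C (twok k).
  by move/sumsetP/imsetP => [I _ /esym/eqP]; apply/negP.
split; [|split] => [t C' h1 | C' h2 | C' h3]; split.
- exact: sumset_compress1 h1.
- by move=> m; apply: has_zero_sums_compress1 h1.
- exact: sumset_compress2 h2.
- by move=> m; apply: has_zero_sums_compress2 no_twok h2.
- exact: sumset_compress3 h3.
- by move=> m; apply: has_zero_sums_compress3 no_twok h3.
Qed.
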